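(* Assume the standing setting below. If $I$ is a dually safe feasible set, then $\mathring{\mathsf{span}}_M(I)\cap E_1$ is a base of $N^*\upharpoonright(\mathsf{span}_M(I)\cap E_1)$.
   Context: Standing setting: $E$ is countable, $M$ is a finitary matroid on $E$, $N$ is a matroid on $E$ that is a direct sum of a finitary and a cofinitary matroid. $E_0$ is the union of the finitary components of $N$ (components = connected components of the circuit hypergraph), $E_1:=E\setminus E_0$, $F^j:=F\cap E_j$. $\mathring{\mathsf{span}}_M(F):=\mathsf{span}_M(F)\setminus F$. $F$ is dually safe if $F^1\subseteq\mathsf{span}_{N^*}(\mathring{\mathsf{span}}_M(F))$. Matroids are possibly infinite; $M/X:=(M^*\upharpoonright(E\setminus X))^*$, $M.X:=M/(E\setminus X)$; $r(K)=0$ means $\varnothing$ is a base of $K$. $W$ is an $(M,N)$-wave if $M\upharpoonright W$ has a base independent in $N.W$. $\mathsf{cond}(M,N)$: for every $(M,N)$-wave $W$, $N.W$ has an $M$-independent base. A set $I$ independent in both $M$ and $N$ is feasible if $\mathsf{cond}(M/I,N/I)$ holds. *)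

From Stdlib Require Import List Relations.

Set Implicit Arguments.

Section Sets.
Variable E : Type.
Definition sub (A B : E -> Prop) : Prop := forall x, A x -> B x.
Definition inter (A B : E -> Prop) : E -> Prop := fun x => A x /\ B x.
Definition union (A B : E -> Prop) : E -> Prop := fun x => A x \/ B x.
Definition diff (A B : E -> Prop) : E -> Prop := fun x => A x /\ ~ B x.
Definition add (A : E -> Prop) (e : E) : E -> Prop := fun x => A x \/ x = e.
Definition rem (A : E -> Prop) (e : E) : E -> Prop := fun x => A x /\ x <> e.
Definition empty : E -> Prop := fun _ => False.
Definition finite (A : E -> Prop) : Prop := exists l : list E, forall x, A x -> In x l.
End Sets.

Record pmat (E : Type) := PMat { grd : E -> Prop ; ind : (E -> Prop) -> Prop }.
Arguments PMat {E}.

Section Matroids.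
Variable E : Type.
Implicit Types (M N : pmat E) (X I B C : E -> Prop).

Definition base M B : Prop :=
  ind M B /\ forall I, ind M I -> sub B I -> sub I B.

Definition is_matroid M : Prop :=
  ind M (@empty E) /\
  (forall I, ind M I -> sub I (grd M)) /\
  (forall I J, ind M I -> sub J I -> ind M J) /\
  (forall I B, ind M I -> ~ base M I -> base M B ->
     exists x, B x /\ ~ I x /\ ind M (add I x)) /\
  (forall I X, ind M I -> sub I X -> sub X (grd M) ->
     exists J, ind M J /\ sub I J /\ sub J X /\
       forall J', ind M J' -> sub J J' -> sub J' X -> sub J' J).

(* dual: bases of M* are complements of bases of M *)
Definition dual M : pmat E :=
  PMat (grd M) (fun I => sub I (grd M) /\
                 exists B, base M B /\ forall x, I x -> ~ B x).

Definition restr M X : pmat E :=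
  PMat (inter X (grd M)) (fun I => ind M I /\ sub I X).

Definition contr M X : pmat E := dual (restr (dual M) (diff (grd M) X)).

Definition contract_to M X : pmat E := contr M (diff (grd M) X).

Definition circuit M C : Prop :=
  sub C (grd M) /\ ~ ind M C /\ forall x, C x -> ind M (rem C x).

Definition span M X : E -> Prop :=
  fun e => grd M e /\ (X e \/ exists C, circuit M C /\ C e /\ sub C (add X e)).

Definition spano M X : E -> Prop := diff (span M X) X.

Definition finitary M : Prop :=
  forall I, sub I (grd M) -> (forall F, finite F -> sub F I -> ind M F) -> ind M I.

Definition cofinitary M : Prop := finitary (dual M).

(* N is the direct sum of a finitary and a cofinitary matroid *)
Definition fin_cofin_sum N : Prop :=
  exists A, sub A (grd N) /\
    (forall I, sub I (grd N) ->
       (ind N I <-> ind N (inter I A) /\ ind N (diff I A))) /\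
    finitary (restr N A) /\ cofinitary (restr N (diff (grd N) A)).

Definition circ_adj M : relation E :=
  fun x y => exists C, circuit M C /\ C x /\ C y.

Definition component M x : E -> Prop :=
  fun y => grd M y /\ clos_refl_trans E (circ_adj M) x y.

Definition E0 N : E -> Prop :=
  fun x => grd N x /\ finitary (restr N (component N x)).
Definition E1 N : E -> Prop := diff (grd N) (E0 N).

Definition dually_safe M N F : Prop :=
  sub (inter F (E1 N)) (span (dual N) (spano M F)).

Definition wave M N W : Prop :=
  sub W (grd M) /\
  exists B, base (restr M W) B /\ ind (contract_to N W) B.

Definition cond M N : Prop :=
  forall W, wave M N W -> exists B, base (contract_to N W) B /\ ind M B.

Definition feasible M N I : Prop :=
  ind M I /\ ind N I /\ cond (contr M I) (contr N I).

End Matroids.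

From Stdlib Require Import List Relations Classical.
Set Implicit Arguments.
Unset Strict Implicit.

(* Let K := (span_M(I) - I) /\ E_1.  We show that K is independent in N* and
   that every N*-independent set J with K <= J <= span_M(I) /\ E_1 equals K.

   Elements of span_M(I) - I are loops of M/I.  Hence a finite
   set F of them is an (M/I, N/I)-wave with the empty base, and cond(M/I, N/I),
   part of feasibility, yields a base of (N/I).F independent in M/I, which must
   be empty; unwinding the duals, F is independent in N*.  Writing N as the
   direct sum of a finitary part on A and a cofinitary part on its complement,
   E_1 avoids A, and N*-independence of subsets of E - A is the same as
   independence in the finitary matroid (N | (E - A))*, so finite subsets of K
   suffice.

   If w in J lies in I, dual safety puts w in span_{N*}(span_M(I) - I),
   i.e. on an N*-circuit C inside (span_M(I) - I) + w.  Two elements of an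
   N*-circuit lie on a common N-circuit, so C stays in the component of w,
   hence in E_1; thus C <= J, contradicting the independence of J. *)

Section Matroids.
Variable E : Type.
Implicit Types (X M N : pmat E) (A B C D F I J K Y : E -> Prop).

Definition hereditary X : Prop := forall I J, ind X I -> sub J I -> ind X J.

Lemma dual_hereditary X : hereditary (dual X).
Proof.
  intros I J [HIg (B & HB & HIB)] HJI. split.
  - intros x Jx. exact (HIg x (HJI x Jx)).
  - exists B. split; [exact HB|]. intros x Jx. exact (HIB x (HJI x Jx)).
Qed.

Lemma restr_hereditary X Y : hereditary X -> hereditary (restr X Y).
Proof.
  intros Hher I J [HI HIY] HJI. split.
  - exact (Hher I J HI HJI).
  - intros x Jx. exact (HIY x (HJI x Jx)).
Qed.

Lemma complement_base_dual X B :
  (forall I, ind X I -> sub I (grd X)) -> base X B ->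
  base (dual X) (fun x => grd X x /\ ~ B x).
Proof.
  intros Hg HB. split.
  - split; [intros x [Hx _]; exact Hx|].
    exists B. split; [exact HB|]. intros x [_ HnB]. exact HnB.
  - intros J [HJg (B' & HB' & HJB')] HsJ x Jx. split; [exact (HJg x Jx)|].
    assert (HB'B : sub B' B).
    { intros v B'v. apply NNPP; intro HnBv.
      apply (HJB' v); [|exact B'v].
      apply HsJ. split; [exact (Hg B' (proj1 HB') v B'v)| exact HnBv]. }
    intro Bx. apply (HJB' x Jx). exact (proj2 HB' B (proj1 HB) HB'B x Bx).
Qed.

Lemma base_dual_complement X D :
  base (dual X) D -> exists B, base X B /\ forall x, D x <-> grd X x /\ ~ B x.
Proof.
  intros [[HDg (B & HB & HDB)] HDmax]. exists B. split; [exact HB|].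
  assert (HcoD : sub (fun x => grd X x /\ ~ B x) D).
  { apply HDmax.
    - split; [intros x [Hx _]; exact Hx|].
      exists B. split; [exact HB|]. intros x [_ HnB]. exact HnB.
    - intros x Dx. split; [exact (HDg x Dx)| exact (HDB x Dx)]. }
  intros x. split.
  - intros Dx. split; [exact (HDg x Dx)| exact (HDB x Dx)].
  - apply HcoD.
Qed.

Lemma dual_ind_empty X : (exists B, base X B) -> ind (dual X) (@empty E).
Proof.
  intros (B & HB). split; [intros x []|].
  exists B. split; [exact HB| intros x []].
Qed.

Lemma dual_dual_ind X K : hereditary X -> ind (dual (dual X)) K -> ind X K.
Proof.
  intros Hher [HKg (D & HD & HKD)].
  destruct (base_dual_complement HD) as (B & HB & HDB).
  apply (Hher B K (proj1 HB)). intros x Kx.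
  apply NNPP; intro HnB. apply (HKD x Kx). apply HDB.
  split; [exact (HKg x Kx)| exact HnB].
Qed.

Lemma greedy_extension X (l : list E) : hereditary X ->
  forall K0, ind X K0 ->
  exists G, ind X G /\ sub K0 G /\ forall x, In x l -> ind X (add G x) -> G x.
Proof.
  intros Hher. induction l as [|a l IH]; intros K0 HK0.
  - exists K0. split; [exact HK0|]. split; [intros x Hx; exact Hx| intros x []].
  - destruct (classic (ind X (add K0 a))) as [Ha | Hna].
    + destruct (IH _ Ha) as (G & HG & HaG & HGmax).
      exists G. split; [exact HG|]. split; [intros x Kx; apply HaG; left; exact Kx|].
      intros x [<- | Hx] Hadd; [apply HaG; right; reflexivity| exact (HGmax x Hx Hadd)].
    + destruct (IH _ HK0) as (G & HG & HKG & HGmax).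
      exists G. split; [exact HG|]. split; [exact HKG|].
      intros x [<- | Hx] Hadd; [|exact (HGmax x Hx Hadd)].
      exfalso. apply Hna. apply (Hher _ _ Hadd).
      intros u [Ku | ->]; [left; exact (HKG u Ku)| right; reflexivity].
Qed.

Lemma finite_base_exists X (l : list E) :
  hereditary X -> ind X (@empty E) -> (forall J x, ind X J -> J x -> In x l) ->
  exists B, base X B.
Proof.
  intros Hher H0 Hfin.
  destruct (greedy_extension l Hher H0) as (G & HG & _ & HGmax).
  exists G. split; [exact HG|]. intros J HJ HGJ x Jx.
  apply (HGmax x (Hfin J x HJ Jx)). apply (Hher J _ HJ).
  intros u [Gu | ->]; [exact (HGJ u Gu)| exact Jx].
Qed.

Section OneMatroid.
Variable M : pmat E.
Hypothesis HM : is_matroid M.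

Definition max_ind Y J : Prop :=
  ind M J /\ sub J Y /\ forall J', ind M J' -> sub J J' -> sub J' Y -> sub J' J.

Lemma max_ind_exists I Y :
  ind M I -> sub I Y -> sub Y (grd M) -> exists J, sub I J /\ max_ind Y J.
Proof.
  intros HI HIY HY. destruct HM as (_ & _ & _ & _ & Hmax).
  destruct (Hmax I Y HI HIY HY) as (J & HJ & HIJ & HJY & HJmax).
  exists J. split; [exact HIJ|]. split; [exact HJ|]. split; [exact HJY| exact HJmax].
Qed.

Lemma ind_extends_to_base I : ind M I -> exists B, base M B /\ sub I B.
Proof.
  intros HI. destruct HM as (_ & Hg & _ & _ & _).
  destruct (max_ind_exists HI (Hg I HI) (fun x Hx => Hx)) as (J & HIJ & HJ & _ & HJmax).
  exists J. split; [|exact HIJ]. split; [exact HJ|].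
  intros K HK HJK. exact (HJmax K HK HJK (Hg K HK)).
Qed.

Lemma max_ind_base_or_add Y J B e :
  max_ind Y J -> base M B -> sub B (add Y e) -> base M J \/ ind M (add J e).
Proof.
  intros (HJ & HJY & HJmax) HB HBY.
  destruct (classic (base M J)) as [HbJ | HnbJ]; [left; exact HbJ| right].
  destruct HM as (_ & _ & _ & Haug & _).
  destruct (Haug J B HJ HnbJ HB) as (z & Bz & HnJz & HJz).
  destruct (HBY z Bz) as [Yz | ->]; [|exact HJz].
  exfalso. apply HnJz. apply (HJmax _ HJz).
  - intros u Ju. left. exact Ju.
  - intros u [Ju | ->]; [exact (HJY u Ju)| exact Yz].
  - right. reflexivity.
Qed.

(* Adding an element x outside a base B creates a circuit through x inside B + x,
   namely x together with those u in B for which B - u + x is independent. *)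
Lemma fundamental_circuit B x :
  base M B -> grd M x -> ~ B x -> exists C, circuit M C /\ C x /\ sub C (add B x).
Proof.
  intros HB Hx HnBx. pose proof HM as (_ & Hg & Hher & Haug & _).
  set (C := fun u => u = x \/ (B u /\ ind M (add (rem B u) x))).
  assert (HCB : sub C (add B x)).
  { intros u [-> | [Bu _]]; [right; reflexivity| left; exact Bu]. }
  assert (HBxg : sub (add B x) (grd M)).
  { intros u [Bu | ->]; [exact (Hg B (proj1 HB) u Bu)| exact Hx]. }
  exists C. split; [|split; [left; reflexivity| exact HCB]]. split; [|split].
  - intros u Cu. exact (HBxg u (HCB u Cu)).
  - intros HC.
    assert (HBx_dep : ~ ind M (add B x)).
    { intros HBx. apply HnBx.
      apply (proj2 HB _ HBx); [intros u Bu; left; exact Bu| right; reflexivity]. }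
    destruct (max_ind_exists HC HCB HBxg) as (J & HCJ & HJmaxind).
    pose proof HJmaxind as (HJ & HJBx & HJmax).
    assert (exists t, add B x t /\ ~ J t) as (t & HBxt & HnJt).
    { apply NNPP; intro Hall. apply HBx_dep. apply (Hher J _ HJ). intros u Hu.
      apply NNPP; intro HnJu. apply Hall. exists u. split; assumption. }
    assert (Bt : B t).
    { destruct HBxt as [Bt | ->]; [exact Bt|]. exfalso. apply HnJt, HCJ. left; reflexivity. }
    destruct (max_ind_base_or_add (e := t) HJmaxind HB (fun u Bu => or_introl (or_introl Bu)))
      as [HbJ | HJt].
    + (* exchanging t out of B against an element of J can only bring in x *)
      assert (HnbBt : ~ base M (rem B t)).
      { intros HbBt. apply (proj2 (proj2 HbBt B (proj1 HB) (fun u Hu => proj1 Hu) t Bt)).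
        reflexivity. }
      assert (HBt : ind M (rem B t)) by exact (Hher B _ (proj1 HB) (fun u Hu => proj1 Hu)).
      destruct (Haug _ J HBt HnbBt HbJ) as (u & Ju & Hnu & Hexch).
      destruct (HJBx u Ju) as [Bu | ->].
      * assert (u = t) as -> by (apply NNPP; intro Hne; exact (Hnu (conj Bu Hne))).
        exact (HnJt Ju).
      * apply HnJt, HCJ. right. split; [exact Bt| exact Hexch].
    + apply HnJt. apply (HJmax _ HJt).
      * intros u Ju. left. exact Ju.
      * intros u [Ju | ->]; [exact (HJBx u Ju)| exact HBxt].
      * right. reflexivity.
  - intros z [-> | [Bz Hexch]].
    + apply (Hher B _ (proj1 HB)). intros u [[-> | [Bu _]] Hne]; [contradiction| exact Bu].
    + apply (Hher _ _ Hexch). intros u [[-> | [Bu _]] Hne]; [right; reflexivity|].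
      left. split; assumption.
Qed.

(* For independent I, the dual restricted to the complement of I has a base:
   the complement of any base extending I. *)
Lemma dual_restr_base_exists I :
  ind M I -> exists D, base (restr (dual M) (diff (grd M) I)) D.
Proof.
  intros HI. destruct (ind_extends_to_base HI) as (B & HB & HIB).
  pose proof (complement_base_dual (proj1 (proj2 HM)) HB) as [HD HDmax].
  exists (fun x => grd M x /\ ~ B x). split.
  - split; [exact HD|]. intros x [Hx HnB]. split; [exact Hx|]. intros Ix. exact (HnB (HIB x Ix)).
  - intros J [HJ _] HsJ. exact (HDmax J HJ HsJ).
Qed.

(* Elements spanned by I but outside I are loops of M / I: they lie in every
   base of the dual restricted to the complement of I. *)
Lemma spano_in_dual_restr_base I D e :
  ind M I -> spano M I e -> base (restr (dual M) (diff (grd M) I)) D -> D e.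
Proof.
  intros HI [[He [HIe | (C & HC & HCe & HCIe)]] HnIe]; [contradiction|].
  intros [[[HDg (B & HB & HDB)] HDI] HDmax].
  pose proof HM as (_ & Hg & Hher & _ & _).
  apply NNPP; intro HnDe.
  assert (HDe : ind (dual M) (add D e)).
  { split; [intros u [Du | ->]; [exact (HDg u Du)| exact He]|].
    destruct (classic (B e)) as [Be | HnBe].
    2:{ exists B. split; [exact HB|]. intros u [Du | ->]; [exact (HDB u Du)| exact HnBe]. }
    (* a maximal independent set in I + (B - e) is a base avoiding D + e *)
    set (Y := fun u => I u \/ (B u /\ u <> e)).
    destruct (max_ind_exists (Y := Y) HI (fun u Iu => or_introl Iu)) as (J & HIJ & HJmaxind).
    { intros u [Iu | [Bu _]]; [exact (Hg I HI u Iu)| exact (Hg B (proj1 HB) u Bu)]. }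
    assert (HBY : sub B (add Y e)).
    { intros u Bu. destruct (classic (u = e)) as [-> | Hne]; [right; reflexivity|].
      left. right. split; assumption. }
    destruct (max_ind_base_or_add HJmaxind HB HBY) as [HbJ | HJe].
    - exists J. split; [exact HbJ|]. pose proof HJmaxind as (_ & HJY & _).
      intros u [Du | ->] Ju; destruct (HJY _ Ju) as [Iu | [Bu Hne]].
      + exact (proj2 (HDI u Du) Iu).
      + exact (HDB u Du Bu).
      + exact (HnIe Iu).
      + exact (Hne eq_refl).
    - (* otherwise J + e would contain the circuit C *)
      exfalso. destruct HC as (_ & HCdep & _). apply HCdep. apply (Hher _ _ HJe).
      intros u Cu. destruct (HCIe u Cu) as [Iu | ->]; [left; exact (HIJ u Iu)| right; reflexivity]. }
  apply HnDe. apply (HDmax (add D e)).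
  - split; [exact HDe|]. intros u [Du | ->]; [exact (HDI u Du)| split; assumption].
  - intros u Du. left. exact Du.
  - right. reflexivity.
Qed.

Lemma dual_circuit_adj C x y :
  circuit (dual M) C -> C x -> C y -> x <> y -> circ_adj M x y.
Proof.
  intros (HCg & HCdep & HCmin) Cx Cy Hxy.
  pose proof HM as (_ & Hg & Hher & _ & _).
  destruct (HCmin y Cy) as [_ (B & HB & HBC)].
  destruct (HCmin x Cx) as [_ (B' & HB' & HB'C)].
  assert (By : B y).
  { apply NNPP; intro HnBy. apply HCdep. split; [exact HCg|]. exists B. split; [exact HB|].
    intros u Cu Bu. destruct (classic (u = y)) as [-> | Hne]; [exact (HnBy Bu)|].
    exact (HBC u (conj Cu Hne) Bu). }
  destruct (fundamental_circuit HB (HCg x Cx) (HBC x (conj Cx Hxy))) as (F & HF & Fx & HFB).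
  destruct (classic (F y)) as [Fy | HnFy]; [exists F; split; [exact HF| split; assumption]|].
  exfalso.
  (* a maximal extension J of B - y avoiding C is not a base (C would be
     co-independent), so J + x is independent; but it contains F *)
  set (Y := diff (grd M) C).
  assert (HBY : sub (rem B y) Y).
  { intros u [Bu Hne]. split; [exact (Hg B (proj1 HB) u Bu)|].
    intros Cu. exact (HBC u (conj Cu Hne) Bu). }
  destruct (max_ind_exists (Hher B _ (proj1 HB) (fun u Hu => proj1 Hu)) HBY
              (fun u Hu => proj1 Hu)) as (J & HBJ & HJmaxind).
  assert (HB'Y : sub B' (add Y x)).
  { intros u B'u. destruct (classic (u = x)) as [-> | Hne]; [right; reflexivity|].
    left. split; [exact (Hg B' (proj1 HB') u B'u)|]. intros Cu. exact (HB'C u (conj Cu Hne) B'u). }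
  destruct (max_ind_base_or_add HJmaxind HB' HB'Y) as [HbJ | HJx].
  - apply HCdep. split; [exact HCg|]. exists J. split; [exact HbJ|].
    pose proof HJmaxind as (_ & HJY & _). intros u Cu Ju. exact (proj2 (HJY u Ju) Cu).
  - destruct HF as (_ & HFdep & _). apply HFdep. apply (Hher _ _ HJx).
    intros u Fu. destruct (HFB u Fu) as [Bu | ->]; [|right; reflexivity].
    left. apply HBJ. split; [exact Bu|]. intros ->. exact (HnFy Fu).
Qed.

Lemma contr_base_exists I : ind M I -> exists B, base (contr M I) B.
Proof.
  intros HI. destruct (dual_restr_base_exists HI) as (D & HD).
  exists (fun x => grd (restr (dual M) (diff (grd M) I)) x /\ ~ D x).
  apply complement_base_dual; [|exact HD].
  intros J [[HJg _] HJY] x Jx. split; [exact (HJY x Jx)| exact (HJg x Jx)].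
Qed.

Lemma contr_ind_avoids_spano I J :
  ind M I -> ind (contr M I) J -> sub J (spano M I) -> forall x, ~ J x.
Proof.
  intros HI [_ (D & HD & HJD)] HJ x Jx.
  exact (HJD x Jx (spano_in_dual_restr_base HI (HJ x Jx) HD)).
Qed.

End OneMatroid.

Lemma adj_sym N x y : circ_adj N x y -> circ_adj N y x.
Proof. intros (C & HC & Cx & Cy). exists C. split; [exact HC| split; assumption]. Qed.

Lemma finitary_restr_mono N A A' : sub A' A -> finitary (restr N A) -> finitary (restr N A').
Proof.
  intros HA'A Hfin K HK Hfinsub.
  assert (HKA' : sub K A') by (intros x Kx; exact (proj1 (HK x Kx))).
  split; [|exact HKA'].
  apply (Hfin K).
  - intros x Kx. split; [exact (HA'A x (HKA' x Kx))| exact (proj2 (HK x Kx))].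
  - intros F HF HFK. destruct (Hfinsub F HF HFK) as [HFi HFA'].
    split; [exact HFi| intros x Fx; exact (HA'A x (HFA' x Fx))].
Qed.

Lemma E1_adj_closed N x y : circ_adj N x y -> E1 N x -> E1 N y.
Proof.
  intros Hxy [Hgx HnE0x]. split.
  - destruct Hxy as (C & (HCg & _) & _ & Cy). exact (HCg y Cy).
  - intros [_ Hfiny]. apply HnE0x. split; [exact Hgx|].
    apply (finitary_restr_mono (A := component N y)); [|exact Hfiny].
    intros z [Hgz Hxz]. split; [exact Hgz|].
    apply rt_trans with x; [apply rt_step, adj_sym, Hxy| exact Hxz].
Qed.

Lemma dual_circuit_E1 N C w :
  is_matroid N -> circuit (dual N) C -> C w -> E1 N w -> sub C (E1 N).
Proof.
  intros HN HC Cw Hw c Cc. destruct (classic (c = w)) as [-> | Hne]; [exact Hw|].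
  exact (E1_adj_closed (dual_circuit_adj HN HC Cw Cc (fun H => Hne (eq_sym H))) Hw).
Qed.

Definition splits N A : Prop :=
  forall I, sub I (grd N) -> (ind N I <-> ind N (inter I A) /\ ind N (diff I A)).

Section DirectSum.
Variable N : pmat E.
Hypothesis HN : is_matroid N.
Variable A : E -> Prop.
Hypothesis HA : splits N A.

Lemma split_adj_closed u v : circ_adj N u v -> A u -> A v.
Proof.
  intros (C & (HCg & HCdep & HCmin) & Cu & Cv) Au.
  pose proof HN as (_ & _ & Hher & _ & _).
  apply NNPP; intros HnAv. apply HCdep. apply (proj2 (HA HCg)). split.
  - apply (Hher _ _ (HCmin v Cv)). intros z [Cz Az]. split; [exact Cz|]. intros ->. exact (HnAv Az).
  - apply (Hher _ _ (HCmin u Cu)). intros z [Cz HnAz]. split; [exact Cz|]. intros ->. exact (HnAz Au).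
Qed.

Lemma split_reach_closed x y : clos_refl_trans E (circ_adj N) x y -> A x -> A y.
Proof.
  induction 1 as [x y Hxy | x | x y z _ IHxy _ IHyz]; intros Ax.
  - exact (split_adj_closed Hxy Ax).
  - exact Ax.
  - exact (IHyz (IHxy Ax)).
Qed.

Lemma E1_disjoint_split x : finitary (restr N A) -> E1 N x -> ~ A x.
Proof.
  intros Hfin [Hgx HnE0x] Ax. apply HnE0x. split; [exact Hgx|].
  apply (finitary_restr_mono (A := A)); [|exact Hfin].
  intros z [_ Hxz]. exact (split_reach_closed Hxz Ax).
Qed.

(* Co-independence of a set avoiding A may be tested in the other summand:
   a base B of N meets the complement of A in a base of that summand. *)
Lemma dual_ind_to_summand F :
  ind (dual N) F -> sub F (diff (grd N) A) -> ind (dual (restr N (diff (grd N) A))) F.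
Proof.
  intros [_ (B & HB & HBF)] HFA.
  pose proof HN as (_ & Hg & Hher & _ & _).
  split; [intros x Fx; split; [exact (HFA x Fx)| exact (proj1 (HFA x Fx))]|].
  exists (inter B (diff (grd N) A)). split.
  - split; [split; [exact (Hher B _ (proj1 HB) (fun x Hx => proj1 Hx))| intros x Hx; exact (proj2 Hx)]|].
    intros J [HJ HJA] HBJ u Ju.
    (* J together with the A-part of B is independent, so it lies in B *)
    assert (HJB : ind N (union J (inter B A))).
    { apply HA.
      - intros v [Jv | [Bv _]]; [exact (Hg J HJ v Jv)| exact (Hg B (proj1 HB) v Bv)].
      - split.
        + apply (Hher B _ (proj1 HB)). intros v [[Jv | [Bv _]] Av]; [|exact Bv].
          exfalso. exact (proj2 (HJA v Jv) Av).
        + apply (Hher J _ HJ). intros v [[Jv | [_ Av]] HnAv]; [exact Jv| contradiction]. }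
    split; [|exact (HJA u Ju)].
    apply (proj2 HB _ HJB); [|left; exact Ju].
    intros v Bv. destruct (classic (A v)) as [Av | HnAv]; [right; split; assumption|].
    left. apply HBJ. split; [exact Bv|]. split; [exact (Hg B (proj1 HB) v Bv)| exact HnAv].
  - intros x Fx [Bx _]. exact (HBF x Fx Bx).
Qed.

(* Conversely, a base of the summand together with a maximal independent
   subset of A is a base of N, so co-independence transfers back. *)
Lemma dual_ind_from_summand K :
  ind (dual (restr N (diff (grd N) A))) K -> (forall x, K x -> ~ A x) -> ind (dual N) K.
Proof.
  intros [HKg (B2 & [[HB2 HB2A] HB2max] & HB2K)] HKA.
  pose proof HN as (H0 & Hg & Hher & _ & _).
  destruct (max_ind_exists HN (Y := inter A (grd N)) H0 (fun x Hx => match Hx with end)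
              (fun x Hx => proj2 Hx)) as (BA & _ & HBA & HBAA & HBAmax).
  split; [intros x Kx; exact (proj2 (HKg x Kx))|].
  exists (union BA B2). split; [split|].
  - apply HA.
    + intros v [BAv | B2v]; [exact (Hg BA HBA v BAv)| exact (Hg B2 HB2 v B2v)].
    + split.
      * apply (Hher BA _ HBA). intros v [[BAv | B2v] Av]; [exact BAv|].
        exfalso. exact (proj2 (HB2A v B2v) Av).
      * apply (Hher B2 _ HB2). intros v [[BAv | B2v] HnAv]; [|exact B2v].
        exfalso. exact (HnAv (proj1 (HBAA v BAv))).
  - intros J HJ HBJ u Ju.
    destruct (proj1 (HA (Hg J HJ)) HJ) as [HJA HJnA].
    destruct (classic (A u)) as [Au | HnAu].
    + left. apply (HBAmax (inter J A) HJA).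
      * intros v BAv. split; [apply HBJ; left; exact BAv| exact (proj1 (HBAA v BAv))].
      * intros v [Jv Av]. split; [exact Av| exact (Hg J HJ v Jv)].
      * split; assumption.
    + right. apply (HB2max (diff J A)).
      * split; [exact HJnA|]. intros v [Jv HnAv]. split; [exact (Hg J HJ v Jv)| exact HnAv].
      * intros v B2v. split; [apply HBJ; right; exact B2v| exact (proj2 (HB2A v B2v))].
      * split; assumption.
  - intros x Kx [BAx | B2x]; [exact (HKA x Kx (proj1 (HBAA x BAx)))| exact (HB2K x Kx B2x)].
Qed.
End DirectSum.

Section FeasibleSet.
Variables M N : pmat E.
Hypothesis HM : is_matroid M.
Hypothesis HN : is_matroid N.
Variable I : E -> Prop.
Hypothesis HIM : ind M I.
Hypothesis HIN : ind N I.

(* A finite set F of loops of M / I is an (M / I, N / I)-wave, witnessed by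
   the empty base of (M / I) | F; finiteness provides a base for the dual
   side of (N / I).F. *)
Lemma finite_spano_wave F :
  finite F -> sub F (spano M I) -> wave (contr M I) (contr N I) F.
Proof.
  intros [l Hl] HFS. split.
  - intros x Fx. destruct (HFS x Fx) as [[Hx _] HnIx]. split; [split; assumption| exact Hx].
  - exists (@empty E). split.
    + split; [split; [exact (dual_ind_empty (dual_restr_base_exists HM HIM))| intros x []]|].
      intros J [HJ HJF] _ x Jx. exfalso.
      exact (contr_ind_avoids_spano HM HIM HJ (fun u Ju => HFS u (HJF u Ju)) Jx).
    + apply dual_ind_empty, finite_base_exists with l.
      * apply restr_hereditary, dual_hereditary.
      * split; [exact (dual_ind_empty (contr_base_exists HN HIN))| intros x []].
      * intros J x [_ HJF] Jx. apply Hl. destruct (HJF x Jx) as [Hx HnFx].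
        apply NNPP; intros HnF. exact (HnFx (conj Hx HnF)).
Qed.

(* If cond(M / I, N / I) holds, every finite set of elements of span(I) - I
   is co-independent in N: the base of (N / I).F supplied by cond is
   M / I-independent, hence empty, so F is co-independent in N / I. *)
Lemma finite_spano_coind F :
  cond (contr M I) (contr N I) -> finite F -> sub F (spano M I) -> sub F (grd N) ->
  ind (dual N) F.
Proof.
  intros Hcond HF HFS HFN.
  destruct (Hcond F (finite_spano_wave HF HFS)) as (B0 & HB0 & HB0M).
  destruct (base_dual_complement HB0) as (D & [[HD _] _] & HB0D).
  assert (HFgrd : forall x, F x -> grd (contr N I) x).
  { intros x Fx. split; [split; [exact (HFN x Fx)| exact (proj2 (HFS x Fx))]| exact (HFN x Fx)]. }
  assert (HB0F : sub B0 F).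
  { intros x B0x. destruct (proj1 (HB0D x) B0x) as [[[Hx HnnF] _] _].
    apply NNPP; intros HnF. exact (HnnF (conj Hx HnF)). }
  assert (HFD : sub F D).
  { intros x Fx. apply NNPP; intros HnDx.
    apply (contr_ind_avoids_spano HM HIM HB0M (fun u Bu => HFS u (HB0F u Bu)) (x := x)).
    apply HB0D. split; [|exact HnDx].
    split; [split; [exact (HFgrd x Fx)| intros [_ HnF]; exact (HnF Fx)]| exact (HFgrd x Fx)]. }
  (* F is co-independent in N / I, the double dual of N* | (E - I) *)
  assert (HFcoind : ind (restr (dual N) (diff (grd N) I)) F).
  { apply dual_dual_ind; [apply restr_hereditary, dual_hereditary|].
    exact (dual_hereditary HD HFD). }
  exact (proj1 HFcoind).
Qed.

End FeasibleSet.

(* Under the hypotheses of the theorem, span(I) - I meets E_1 in a set that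
   is co-independent in N: finitarity of the dual on the cofinitary summand
   reduces this to the finite case. *)
Lemma spano_E1_coind M N I :
  is_matroid M -> is_matroid N -> fin_cofin_sum N ->
  ind M I -> ind N I -> cond (contr M I) (contr N I) ->
  ind (dual N) (inter (spano M I) (E1 N)).
Proof.
  intros HM HN (A & _ & HA & HAfin & HAcof) HIM HIN Hcond.
  assert (HnA : forall x, E1 N x -> ~ A x) by (intros x; exact (E1_disjoint_split HN HA HAfin)).
  apply (dual_ind_from_summand HN HA); [|intros x [_ Hx]; exact (HnA x Hx)].
  apply HAcof.
  - intros x [_ [Hx HnE0]]. split; [split; [exact Hx| exact (HnA x (conj Hx HnE0))]| exact Hx].
  - intros F HF HFK. apply (dual_ind_to_summand HN HA).
    + apply (finite_spano_coind HM HN HIM HIN Hcond HF).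
      * intros x Fx. exact (proj1 (HFK x Fx)).
      * intros x Fx. exact (proj1 (proj2 (HFK x Fx))).
    + intros x Fx. destruct (HFK x Fx) as [_ Hx].
      split; [exact (proj1 Hx)| exact (HnA x Hx)].
Qed.

(* Dual safety makes this set maximal: an element w of I in a larger
   co-independent set would be spanned in N* by span(I) - I, and the dual
   circuit through w stays in E_1, hence inside the larger set. *)
Lemma spano_E1_maximal M N I J :
  is_matroid N -> dually_safe M N I ->
  ind (dual N) J -> sub J (inter (span M I) (E1 N)) ->
  sub (inter (spano M I) (E1 N)) J -> sub J (inter (spano M I) (E1 N)).
Proof.
  intros HN Hsafe HJ HJS HKJ w Jw. destruct (HJS w Jw) as [Hspw Hw].
  destruct (classic (I w)) as [Iw | HnIw]; [|split; [split; assumption| exact Hw]].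
  exfalso.
  destruct (Hsafe w (conj Iw Hw)) as [_ [[_ HnIw] | (C & HC & Cw & HCS)]]; [exact (HnIw Iw)|].
  pose proof (dual_circuit_E1 HN HC Cw Hw) as HCE1.
  destruct HC as (_ & HCdep & _). apply HCdep. apply (dual_hereditary HJ).
  intros c Cc. destruct (HCS c Cc) as [Sc | ->]; [|exact Jw].
  apply HKJ. split; [exact Sc| exact (HCE1 c Cc)].
Qed.

End Matroids.

Theorem mainTheorem13 (E : Type) (M N : pmat E)
  (HEcount : exists f : E -> nat, forall x y, f x = f y -> x = y)
  (HMg : forall x, grd M x) (HNg : forall x, grd N x)
  (HM : is_matroid M) (HN : is_matroid N)
  (HMfin : finitary M) (HNsum : fin_cofin_sum N)
  (I : E -> Prop) (HIsafe : dually_safe M N I) (HIfeas : feasible M N I) :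
  base (restr (dual N) (inter (span M I) (E1 N))) (inter (spano M I) (E1 N)).
Proof.
  destruct HIfeas as (HIM & HIN & Hcond).
  split.
  - split; [exact (spano_E1_coind HM HN HNsum HIM HIN Hcond)|].
    intros x [[Hsp _] Hx]. split; assumption.
  - intros J [HJ HJS] HKJ. exact (spano_E1_maximal HN HIsafe HJ HJS HKJ).
Qed.
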